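(* There is an absolute constant $C$ such that the following holds. Let $A\neq 1$ be a finite group, set $k=k(A)$, let $P\leq S_r$ be a regular permutation group of degree $r$, and let $G=A\wr P$. Then \[ \left|k(G)-\frac{k^r}{r}\right|\leq C\, r\, k^{r/2}. \]
   Context: $k(X)$ denotes the number of conjugacy classes of a finite group $X$. $A\wr P=A^r\rtimes P$ with $P$ permuting the $r$ factors. *)

From HB Require Import structures.
From mathcomp Require Import all_boot all_order all_algebra all_fingroup.
From mathcomp Require Import all_field.

Set Implicit Arguments.
Unset Strict Implicit.
Unset Printing Implicit Defensive.

Import GRing.Theory Num.Theory.
Local Open Scope group_scope.

Definition kcl (gT : finGroupType) (G : {set gT}) : nat := #|classes G|.

Definition regular_perm (r : nat) (P : {set {perm 'I_r}}) : bool :=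
  [transitive P, on [set: 'I_r] | 'P] && [forall i : 'I_r, 'C_P[i | 'P] == 1].

Section Wreath.
Variables (A : finGroupType) (r : nat).

Definition wbase : finGroupType := {dffun forall i : 'I_r, A}.

Definition wact (f : wbase) (s : {perm 'I_r}) : wbase := [ffun i => f (s^-1 i)].

Lemma wact1 : wact^~ 1 =1 id.
Proof. by move=> f; apply/ffunP => i; rewrite ffunE invg1 perm1. Qed.

Lemma wactM f : act_morph wact f.
Proof.
by move=> s t; apply/ffunP => i; rewrite !ffunE invMg permM.
Qed.

Definition wact_action := TotalAction wact1 wactM.

Lemma wact_is_groupAction : is_groupAction [set: wbase] wact_action.
Proof.
move=> s _; rewrite inE; apply/andP; split.
  by apply/subsetP => x; rewrite inE.
apply/morphicP => x y _ _; rewrite !actpermE /=.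
by apply/ffunP => i; rewrite !ffunE.
Qed.

Definition wact_gaction := GroupAction wact_is_groupAction.

Definition wreath (P : {group {perm 'I_r}}) : finGroupType :=
  sdprod_by (ract_groupAction wact_gaction (subsetT P)).

End Wreath.

From HB Require Import structures.
From mathcomp Require Import all_boot all_order all_algebra all_fingroup.
From mathcomp Require Import all_field.
Import Order.TTheory GRing.Theory Num.Theory.
Set Implicit Arguments.
Unset Strict Implicit.
Unset Printing Implicit Defensive.

(* Count commuting pairs: a finite group X has k(X) |X| of them.  In G = A wr P
   the base group B = A^r has index |P| = r and k(B) = k(A)^r, so the pairs inside
   B give k(A)^r <= r k(G).  Any other commuting pair has an entry u outside B,
   and |C_G(u)| <= r |C_B(u)|.  For u = (t, g) with t <> 1, an element f of B
   centralises u iff (f^t)^g = f; summed over g and f, these transporter sizes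
   are at most |A|^r times the number of t-invariant vectors of conjugacy classes
   of A, that is |A|^r k(A)^(number of t-orbits) <= |A|^r k(A)^(r/2), because the
   nontrivial elements of a regular group are fixed-point-free.  Altogether
   r k(G) <= k(A)^r + 2 r^2 k(A)^(r/2). *)

Section CommutingPairs.
Local Open Scope group_scope.
Variable gT : finGroupType.
Implicit Types (G H : {group gT}) (x y : gT).

Lemma sum_card_subcent1 G : (\sum_(x in G) #|'C_G[x]| = #|classes G| * #|G|)%N.
Proof.
rewrite -[classes G](eq_imset _ (orbitJ G)) -Frobenius_Cauchy; last by rewrite astabsJ normG.
by apply: eq_bigr => x _; rewrite /afix1 afixJ cent_set1.
Qed.

Lemma sum_card_cent1 :
  (\sum_(x : gT) #|'C[x]| = #|classes [set: gT]| * #|gT|)%N.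
Proof.
by rewrite -cardsT -sum_card_subcent1; apply: eq_big => [x | x _]; rewrite ?inE ?setTI.
Qed.

Lemma mem_cent1_conjg x y : (x \in 'C[y]) = (x ^ y == x).
Proof. by apply/cent1P/eqP => [/commgP/conjg_fixP | /conjg_fixP/commgP]. Qed.

Lemma card_class_cent1 x : (#|x ^: [set: gT]| * #|'C[x]| = #|gT|)%N.
Proof. by rewrite -index_cent1 setTI mulnC Lagrange ?subsetT ?cardsT. Qed.

Lemma sum_card_cent1_class K :
  K \in classes [set: gT] -> (\sum_(x in K) #|'C[x]| = #|gT|)%N.
Proof.
case/imsetP => y _ ->; rewrite -(card_class_cent1 y) -sum_nat_const.
by apply: eq_bigr => _ /imsetP [g _ ->]; rewrite cent1J cardJg.
Qed.

Lemma card_conjg_eq_le y z :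
  (#|[set g | (y ^ g == z)%g]| <= (y ^: [set: gT] == z ^: [set: gT]) * #|'C[z]|)%N.
Proof.
have [-> | [g0]] := set_0Vmem [set g | (y ^ g == z)%g]; first by rewrite cards0.
rewrite inE => /eqP yg0z; rewrite -yg0z classGidl ?inE // eqxx mul1n.
rewrite -(card_lcoset _ g0); apply/subset_leq_card/subsetP => g; rewrite inE => /eqP ygz.
by rewrite mem_lcoset cent1C mem_cent1_conjg -conjgM mulKVg ygz.
Qed.

Lemma card_subcent1_le_index G H x :
  H \subset G -> (#|'C_G[x]| <= #|G : H| * #|'C_H[x]|)%N.
Proof.
move=> sHG; rewrite -(LagrangeI 'C_G[x] H) mulnC leq_mul //.
  exact/subset_leq_card/imsetS/subsetIl.
by rewrite setIAC (setIidPr sHG).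
Qed.

Lemma card_subcent1_sum (X : {set gT}) x :
  #|'C_X[x]| = (\sum_(y in X) (y \in 'C[x]))%N.
Proof.
rewrite -sum1_card big_mkcond [RHS]big_mkcond; apply: eq_bigr => y _.
by rewrite inE; case: (y \in X); case: (y \in 'C[x]).
Qed.

Lemma sum_card_subcent1C (X Y : {set gT}) :
  (\sum_(x in X) #|'C_Y[x]| = \sum_(y in Y) #|'C_X[y]|)%N.
Proof.
under eq_bigr do rewrite card_subcent1_sum.
under [RHS]eq_bigr do rewrite card_subcent1_sum.
by rewrite exchange_big; apply: eq_bigr => y _; apply: eq_bigr => x _; rewrite cent1C.
Qed.

Lemma sum_card_subcent1S G H : H \subset G ->
  (\sum_(x in H) #|'C_H[x]| <= \sum_(x in G) #|'C_G[x]|)%N.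
Proof.
move=> sHG; rewrite [X in (_ <= X)%N](big_setID H) /= (setIidPr sHG).
apply: leq_trans (leq_addr _ _); apply: leq_sum => x _.
by apply/subset_leq_card/setSI.
Qed.

Lemma sum_card_subcent1_le G H : H \subset G ->
  (\sum_(x in G) #|'C_G[x]|
     <= \sum_(x in H) #|'C_H[x]| + 2 * #|G : H| * \sum_(x in G :\: H) #|'C_H[x]|)%N.
Proof.
move=> sHG; set S := (\sum_(x in G :\: H) #|'C_H[x]|)%N.
have split_cent x : #|'C_G[x]| = (#|'C_H[x]| + #|'C_(G :\: H)[x]|)%N.
  by rewrite !card_subcent1_sum (big_setID H) /= (setIidPr sHG).
have cross : (\sum_(x in H) #|'C_(G :\: H)[x]| <= #|G : H| * S)%N.
  by rewrite sum_card_subcent1C leq_pmull ?indexg_gt0.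
have outer : (\sum_(x in G :\: H) #|'C_G[x]| <= #|G : H| * S)%N.
  by rewrite /S big_distrr /=; apply: leq_sum => x _; apply: card_subcent1_le_index.
rewrite [X in (X <= _)%N](big_setID H) /= (setIidPr sHG).
under eq_bigr do rewrite split_cent.
by rewrite big_split /= -addnA leq_add2l -mulnA mul2n -addnn; apply: leq_add.
Qed.

End CommutingPairs.

Lemma card_ffun_forall_in (I T : finType) (F : I -> {pred T}) :
  #|[set f : {ffun I -> T} | [forall i, f i \in F i]]| = (\prod_i #|F i|)%N.
Proof.
rewrite (eq_card (B := family F)); last by move=> f; rewrite inE; apply/forallP/familyP.
by rewrite card_family foldrE big_map big_enum.
Qed.

Lemma prodn_bool (I : finType) (b : pred I) : (\prod_i b i = [forall i, b i])%N.
Proof.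
have [/forallP bT | /forallPn [i /negbTE bi]] := boolP [forall i, b i].
  by rewrite big1 // => i _; rewrite bT.
by rewrite (bigD1 i) //= bi.
Qed.

Lemma exchange_sum_card (I J : finType) (R : I -> J -> bool) :
  (\sum_i #|[set j | R i j]| = \sum_j #|[set i | R i j]|)%N.
Proof.
under eq_bigr do rewrite -sum1dep_card big_mkcond.
under [RHS]eq_bigr do rewrite -sum1dep_card big_mkcond.
exact: exchange_big.
Qed.

Section ProductGroup.
Local Open Scope group_scope.
Variables (I : finType) (gT : finGroupType).
Local Notation gTI := {dffun forall i : I, gT}.
Implicit Types f g : gTI.

Lemma card_dffun_group : #|gTI| = (#|gT| ^ #|I|)%N.
Proof. exact: card_ffun. Qed.

Lemma cent1_dffunE f g : (g \in 'C[f]) = [forall i, g i \in 'C[f i]].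
Proof.
apply/cent1P/forallP => [fg i | fg]; first by apply/cent1P; rewrite /commute -!mulg_ffun fg.
by apply/ffunP => i; rewrite !mulg_ffun; apply/cent1P.
Qed.

Lemma card_cent1_dffun f : #|'C[f]| = (\prod_i #|'C[f i]|)%N.
Proof.
rewrite -(card_ffun_forall_in (fun i => mem 'C[f i])).
by apply: eq_card => g; rewrite cent1_dffunE [RHS]in_set.
Qed.

Lemma nclasses_dffun :
  #|classes [set: gTI]| = (#|classes [set: gT]| ^ #|I|)%N.
Proof.
have gTI_gt0 : (0 < #|gTI|)%N by apply/card_gt0P; exists 1.
have : (#|classes [set: gTI]| * #|gTI| = #|classes [set: gT]| ^ #|I| * #|gTI|)%N.
  rewrite -sum_card_cent1 card_dffun_group -expnMn -sum_card_cent1.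
  under eq_bigr do rewrite card_cent1_dffun.
  by rewrite -(bigA_distr_bigA (fun _ x => #|'C[x]|)) prod_nat_const.
by move/eqP; rewrite eqn_pmul2r // => /eqP.
Qed.

Lemma conjg_dffunE f g i : (f ^ g) i = f i ^ g i.
Proof. by rewrite !mulg_ffun invg_ffun. Qed.

Lemma card_conjg_dffun_eq y z :
  #|[set g : gTI | y ^ g == z]| = (\prod_i #|[set x | (y i ^ x == z i)%g]|)%N.
Proof.
rewrite -(card_ffun_forall_in (fun i => mem [set x | (y i ^ x == z i)%g])).
apply: eq_card => g; rewrite [RHS]in_set !inE.
apply/eqP/forallP => [<- i | yz]; first by rewrite inE conjg_dffunE.
by apply/ffunP => i; rewrite conjg_dffunE; have := yz i; rewrite inE => /eqP.
Qed.

Lemma sum_card_cent1_dffun_classes (c : {ffun I -> {set gT}}) :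
    (forall i, c i \in classes [set: gT]) ->
  (\sum_(f : gTI | [forall i, f i \in c i]) #|'C[f]| = #|gT| ^ #|I|)%N.
Proof.
move=> cK; transitivity (\prod_i \sum_(x in c i) #|'C[x]|)%N; last first.
  by under eq_bigr => i _ do rewrite sum_card_cent1_class //; rewrite prod_nat_const.
rewrite bigA_distr_big_dep; apply: eq_big => [f | f _]; last exact: card_cent1_dffun.
by apply/forallP/familyP.
Qed.

Lemma sum_card_twisted_conjg_le (s : {perm I}) :
  (\sum_(f : gTI) #|[set g : gTI | ([ffun i => f (s i)] ^ g == f)%g]|
    <= #|gT| ^ #|I| * #|[set c : {ffun I -> {set gT}} |
          [forall i, c i \in classes [set: gT]] && [forall i, c (s i) == c i]]|)%N.
Proof.
pose cv f : {ffun I -> {set gT}} := [ffun i => f i ^: [set: gT]].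
have term_le f : (#|[set g : gTI | ([ffun i => f (s i)] ^ g == f)%g]|
                   <= [forall i, cv f (s i) == cv f i] * #|'C[f]|)%N.
  rewrite card_conjg_dffun_eq card_cent1_dffun -prodn_bool -big_split /=.
  by apply: leq_prod => i _; rewrite !ffunE card_conjg_eq_le.
apply: (@leq_trans (\sum_f [forall i, cv f (s i) == cv f i] * #|'C[f]|)%N).
  by apply: leq_sum => f _; apply: term_le.
rewrite (partition_big cv (fun c => [forall i, c i \in classes [set: gT]])) /=; last first.
  by move=> f _; apply/forallP => i; rewrite ffunE mem_classes ?inE.
rewrite mulnC -sum_nat_cond_const big_mkcondr /=; apply/eq_leq/eq_bigr => c /forallP cK.
rewrite (eq_bigr (fun f => [forall i, c (s i) == c i] * #|'C[f]|))%N => [|f /eqP -> //].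
rewrite -big_distrr /=; case: ifP => _; rewrite ?mul0n // mul1n.
rewrite -(sum_card_cent1_dffun_classes cK); apply: eq_bigl => f.
apply/eqP/forallP => [<- i | fc]; first by rewrite ffunE class_refl.
apply/ffunP => i; rewrite ffunE; have /imsetP [y _ cy] := cK i.
by rewrite cy; apply/class_eqP; rewrite -cy.
Qed.

End ProductGroup.

Section PermutationOrbits.
Local Open Scope group_scope.
Variables (T : finType) (s : {perm T}).

Lemma card_porbits_fixedpoint_free :
  (forall x, s x != x) -> (2 * #|porbits s| <= #|T|)%N.
Proof.
move=> s_free.
have porbits_partition : partition (porbits s) [set: T].
  have -> : porbits s = orbit 'P <[s]> @: [set: T].
    by apply/setP => O; rewrite /porbits porbitE; apply/imsetP/imsetP => -[x _ ->]; exists x.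
  apply: orbit_partition.
  by apply/subsetP => x _; rewrite !inE; apply/subsetP => y; rewrite !inE.
rewrite -cardsT (card_partition porbits_partition) mulnC -sum_nat_const.
apply: leq_sum => _ /imsetP [x _ ->].
have <- : #|[set x; s x]| = 2 by rewrite cards2 eq_sym s_free.
apply/subset_leq_card/subsetP => y; rewrite !inE => /orP [] /eqP ->.
  exact: porbit_id.
by have := mem_porbit s 1 x; rewrite expg1.
Qed.

Lemma perm_invariant_porbit (U : Type) (k : T -> U) :
  (forall x, k (s x) = k x) -> forall x y, y \in porbit s x -> k y = k x.
Proof.
move=> ks x _ /porbitP [n ->]; elim: n => [|n IHn]; first by rewrite expg0 perm1.
by rewrite expgSr permM ks.
Qed.

Lemma card_perm_invariant_ffun_le (U : finType) (R : {set U}) :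
  (#|[set k : {ffun T -> U} | [forall x, k x \in R] && [forall x, k (s x) == k x]]|
    <= #|R| ^ #|porbits s|)%N.
Proof.
(* An invariant k is determined by its values at one point of each orbit. *)
pose restr (k : {ffun T -> U}) : {ffun {set T} -> option U} :=
  [ffun O => if O \in porbits s then omap k [pick x in O] else None].
have card_SomeR : #|Some @: R| = #|R| by apply: card_imset; apply: Some_inj.
rewrite -card_SomeR -(card_pffun_on None).
rewrite -(card_in_imset (f := restr)); last first.
  move=> k1 k2; rewrite !inE => /andP [_ /forallP k1s] /andP [_ /forallP k2s] eq12.
  apply/ffunP => x; have xO : porbit s x \in porbits s by apply: imset_f.
  have := congr1 (fun F : {ffun {set T} -> option U} => F (porbit s x)) eq12.
  rewrite !ffunE xO; case: pickP => [y xy [] | /(_ x)]; last by rewrite porbit_id.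
  have k1_porbit := perm_invariant_porbit (fun x => eqP (k1s x)) xy.
  by rewrite k1_porbit => ->; rewrite (perm_invariant_porbit (fun x => eqP (k2s x)) xy).
apply/subset_leq_card/subsetP => F /imsetP [k]; rewrite inE => /andP [/forallP kR _] ->.
apply/pffun_onP; split.
  by apply/subsetP => O; rewrite inE ffunE; case: (O \in porbits s); rewrite ?eqxx.
move=> o /mapP [O]; rewrite mem_enum => O_orbit ->; rewrite ffunE O_orbit.
case/imsetP: O_orbit => x _ ->.
case: pickP => [y _ | /(_ x)]; last by rewrite porbit_id.
by rewrite /= imset_f.
Qed.

End PermutationOrbits.

Section RegularPermutationGroup.
Local Open Scope group_scope.
Variables (r : nat) (P : {group {perm 'I_r}}).
Hypothesis P_regular : regular_perm P.

Lemma card_regular_perm : #|P| = r.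
Proof.
case/andP: P_regular => /imsetP [x _ Px] /forallP P_stab1.
have := card_orbit_stab 'P P x.
by rewrite -Px (eqP (P_stab1 x)) cards1 muln1 cardsT card_ord.
Qed.

Lemma regular_perm_fixedpoint_free t : t \in P -> t != 1 -> forall i, t i != i.
Proof.
move=> tP t1 i; apply: contra t1 => /eqP ti.
case/andP: P_regular => _ /forallP P_stab1.
have : t \in 'C_P[i | 'P] by rewrite inE tP; apply/astab1P.
by rewrite (eqP (P_stab1 i)) inE.
Qed.

End RegularPermutationGroup.

Section WreathProduct.
Local Open Scope group_scope.
Variables (A : finGroupType) (r : nat) (P : {group {perm 'I_r}}).
Local Notation G := (wreath A P).
Local Notation to := (ract_groupAction (wact_gaction A r) (subsetT P)).
Local Notation B := (sdpair1 to @* [set: wbase A r]).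

Lemma card_wreath_base : #|B| = (#|A| ^ r)%N.
Proof. by rewrite (card_injm (injm_sdpair1 to)) ?subsetT // cardsT card_ffun card_ord. Qed.

Lemma nclasses_wreath_base : #|classes B| = (#|classes [set: A]| ^ r)%N.
Proof. by rewrite (nclasses_injm (injm_sdpair1 to)) ?subsetT // nclasses_dffun card_ord. Qed.

Lemma index_wreath_base : #|[set: G] : B| = #|P|.
Proof. by rewrite -(index_sdprod (sdprod_sdpair to)) (card_injm (injm_sdpair2 to)). Qed.

Lemma wreath_top_mem (u : G) : u.1 \in P.
Proof. by case: u => [[t f]] /= /setXP []. Qed.

Lemma mem_wreath_base u : (u \in B) = (u.1 == 1).
Proof.
apply/idP/eqP => [/morphimP [f _ _ ->] | u1].
  by rewrite /sdpair1 val_insubd inE group1 in_setT.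
by rewrite [u]sdpairE u1 morph1 mul1g mem_morphim ?inE.
Qed.

Lemma sdpair1_cent1_wreath f u :
  (sdpair1 to f \in 'C[u]) = (wact f u.1 ^ u.2 == f).
Proof.
rewrite mem_cent1_conjg {1}(sdpairE u) conjgM -sdpair_act ?inE ?wreath_top_mem //.
by rewrite -morphJ ?inE // (inj_in_eq (injmP (injm_sdpair1 to))) ?inE.
Qed.

Lemma card_subcent1_wreath_base u :
  #|'C_B[u]| = #|[set f : wbase A r | wact f u.1 ^ u.2 == f]|.
Proof.
rewrite -[RHS](card_injm (injm_sdpair1 to)) ?subsetT //.
apply: eq_card => x; apply/setIP/morphimP => [[/morphimP [f _ _ ->] fu] | [f _ fS ->]].
  by exists f; rewrite ?inE -?sdpair1_cent1_wreath.
move: fS; rewrite inE -sdpair1_cent1_wreath => fu.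
by split=> //; rewrite mem_morphim ?inE.
Qed.

Lemma sum_wreath (F : {perm 'I_r} -> wbase A r -> nat) :
  (\sum_(u : G) F u.1 u.2 = \sum_(t in P) \sum_(f : wbase A r) F t f)%N.
Proof.
rewrite pair_big [RHS](reindex_omap (val : G -> _) insub) /= => [|p /andP [pP _]].
  by apply: eq_bigl => u; rewrite valK eqxx andbT wreath_top_mem.
by rewrite insubT ?inE ?pP.
Qed.

Lemma sum_card_subcent1_wreath_base_le :
    (forall t, t \in P -> t != 1 -> forall i, t i != i) ->
  (\sum_(u in [set: G] :\: B) #|'C_B[u]|
    <= #|P| * (#|A| ^ r * #|classes [set: A]| ^ r./2))%N.
Proof.
move=> P_free; under eq_bigr do rewrite card_subcent1_wreath_base.
rewrite big_mkcond /=.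
under eq_bigr do rewrite in_setD mem_wreath_base in_setT andbT.
rewrite (sum_wreath (fun t g => if t != 1 then #|[set f | wact f t ^ g == f]| else 0)).
rewrite -sum_nat_const; apply: leq_sum => t tP; case: eqP => [_ | /eqP t1] /=.
  by rewrite big1.
(* wact f t is [ffun i => f (t^-1 i)], the twist by t^-1. *)
rewrite exchange_sum_card (leq_trans (sum_card_twisted_conjg_le _ t^-1)) // card_ord leq_mul //.
apply: leq_trans (card_perm_invariant_ffun_le _ _) _.
rewrite leq_pexp2l ?classes_gt0 // geq_half_double -mul2n.
have tV1 : t^-1 != 1 by rewrite eq_invg1.
by have := card_porbits_fixedpoint_free (P_free _ (groupVr tP) tV1); rewrite card_ord.
Qed.

Lemma wreath_nclasses_bounds : regular_perm P ->
  (#|classes [set: A]| ^ r <= #|classes [set: G]| * r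
    <= #|classes [set: A]| ^ r + 2 * r * #|classes [set: A]| ^ r./2 * r)%N.
Proof.
move=> P_regular.
have sBG : B \subset [set: G] := subsetT B.
have a_gt0 : (0 < #|A| ^ r)%N by rewrite -card_wreath_base cardG_gt0.
have cardG : #|[set: G]| = (r * #|A| ^ r)%N.
  by rewrite -(Lagrange sBG) /= index_wreath_base card_regular_perm // card_wreath_base mulnC.
have nonbase_le := sum_card_subcent1_wreath_base_le (regular_perm_fixedpoint_free P_regular).
have := sum_card_subcent1S sBG; have := sum_card_subcent1_le sBG.
rewrite /= !sum_card_subcent1 nclasses_wreath_base card_wreath_base index_wreath_base cardG.
rewrite card_regular_perm // in nonbase_le *.
set S := (\sum_(x in _) _)%N in nonbase_le *.
move=> /= upper lower; apply/andP; split; rewrite -(leq_pmul2r a_gt0); first by rewrite -mulnA.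
have S_le : (S <= #|classes [set: A]| ^ r./2 * (r * #|A| ^ r))%N.
  by apply: leq_trans nonbase_le _; rewrite [X in (_ <= X)%N]mulnC -mulnA.
by rewrite -mulnA (leq_trans upper) // mulnDl leq_add2l -!mulnA !leq_mul2l S_le !orbT.
Qed.

End WreathProduct.

Local Open Scope ring_scope.

Lemma natr_exp_half_le_sqrtC (k n : nat) :
  (0 < k)%N -> (k ^ n./2)%:R <= sqrtC (k%:R ^+ n) :> algC.
Proof.
move=> k_gt0; rewrite -(sqrCK (ler0n _ (k ^ n./2))) ler_sqrtC ?qualifE /= ?exprn_ge0 ?ler0n //.
rewrite -!natrX ler_nat -expnM leq_pexp2l // muln2.
by rewrite -[leqRHS](odd_double_half n) leq_addl.
Qed.

Theorem lemma4p4 :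
  exists C : algC, forall (A : finGroupType) (r : nat) (P : {group {perm 'I_r}}),
    (1 < #|A|)%N -> regular_perm P ->
    `| (kcl [set: wreath A P])%:R - ((kcl [set: A])%:R ^+ r) / r%:R |
      <= C * r%:R * sqrtC ((kcl [set: A])%:R ^+ r).
Proof.
(* The bound also holds for trivial A. *)
exists 2 => A r P _ P_regular.
have r_gt0 : (0 < r)%N by rewrite -(card_regular_perm P_regular) cardG_gt0.
have k_gt0 := classes_gt0 [set: A].
have /andP [lower upper] := wreath_nclasses_bounds A P_regular.
rewrite /kcl; set k := #|classes _| in k_gt0 lower upper *.
set kG := #|classes _| in lower upper *.
have -> : kG%:R - k%:R ^+ r / r%:R = (kG * r - k ^ r)%N%:R / r%:R :> algC.
  by rewrite natrB // natrM natrX mulrBl mulfK // pnatr_eq0 -lt0n.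
rewrite ger0_norm ?divr_ge0 ?ler0n // ler_pdivrMr ?ltr0n //.
apply: (@le_trans _ _ (2 * r * k ^ r./2 * r)%N%:R); first by rewrite ler_nat leq_subLR.
rewrite !natrM ler_wpM2r ?ler0n // ler_wpM2l ?mulr_ge0 ?ler0n //.
exact: natr_exp_half_le_sqrtC.
Qed.
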